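(* Let $\pi,\pi'\in\mathbb P$ and let $F:[0,1]\cap\mathbb Q\to\mathbb Q$ be a piecewise linear continuous map with $F(0)=0$ and $F(1)\in a_0^{-1}\mathbb Z$. Assume $\pi(t)=\pi'(t)+F(t)\delta$ for all $t$. Then for each $w\in W$, $(S_w\pi)(t)=(S_w\pi')(t)+F(t)\delta$ for all $t\in[0,1]\cap\mathbb Q$.
   Context: $\mathfrak g$ is an affine Lie algebra over $\mathbb Q$ of affine type with index set $I$, simple coroots $h_j$, fundamental weights $\Lambda_j$, null root $\delta$, $a_0=2$ if $\mathfrak g$ is of type $A^{(2)}_{2\ell}$ and $a_0=1$ otherwise, Weyl group $W=\langle r_j\mid j\in I\rangle$, weight lattice $P=\bigoplus_j\mathbb Z\Lambda_j\oplus\mathbb Za_0^{-1}\delta$. $\mathbb P$ is the set of piecewise linear continuous maps $\pi:[0,1]\cap\mathbb Q\to\mathbb Q\otimes P$ with $\pi(0)=0$, $\pi(1)\in P$. $e_j,f_j$ ($j\in I$) are Littelmann's root operators on $\mathbb P\cup\{\mathbf0\}$. For $j\in I$, $S_j\pi=f_j^n\pi$ if $n=\pi(1)(h_j)\ge0$ and $S_j\pi=e_j^{-n}\pi$ if $n<0$; $w\mapsto S_w$ is the unique action of $W$ on $\mathbb P$ with $S_{r_j}=S_j$ (Littelmann). *)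

From mathcomp Require Import all_boot all_order all_algebra.
From Stdlib Require Import ClassicalEpsilon.
Set Implicit Arguments. Unset Strict Implicit. Unset Printing Implicit Defensive.
Import Order.TTheory GRing.Theory Num.Theory.
Local Open Scope ring_scope.

(* I : index set, i0 : the distinguished node "0",                     *)
(* A i j = a_{ij} = <h_i, alpha_j> (generalized Cartan matrix),        *)
(* a  : primitive positive integer null vector of A   (delta = sum a_j alpha_j), *)
(* av : primitive positive integer null vector of A^T (K = sum av_i h_i). *)
(* Kac's labelling of node 0 is characterised by av i0 = 1; then       *)
(* a i0 = 2 for A^{(2)}_{2l} and a i0 = 1 otherwise, i.e. a i0 = a_0.   *)

Definition is_GCM (I : finType) (A : I -> I -> int) : Prop :=
  [/\ forall i, A i i = 2,
      forall i j, i != j -> A i j <= 0 &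
      forall i j, (A i j == 0) = (A j i == 0)].

Definition indecomposable (I : finType) (A : I -> I -> int) : Prop :=
  forall J : {set I}, J != set0 -> J != setT ->
    exists i j, [/\ i \in J, j \notin J & A i j != 0].

Definition prim_null_vector (I : finType) (A : I -> I -> int) (c : I -> nat) :=
  [/\ forall j, (0 < c j)%N,
      forall i, \sum_(j : I) A i j * (c j)%:Z = 0 &
      \big[gcdn/0%N]_(j : I) c j = 1%N].

(* Kac, Thm 4.3: an indecomposable GCM is of affine type iff it has a
   positive null vector; a and av are the (unique) primitive ones. *)
Definition affine_datum (I : finType) (i0 : I) (A : I -> I -> int)
    (a av : I -> nat) : Prop :=
  [/\ is_GCM A, indecomposable A, prim_null_vector A a,
      prim_null_vector (fun i j => A j i) av & av i0 = 1%N].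

(* Weights: Q (x) P with basis Lambda_j (j : I) and delta (None).       *)
Definition weight (I : finType) := {ffun option I -> rat^o}.

Definition Lam (I : finType) (j : I) : weight I := [ffun k => (k == Some j)%:R].
Definition delta (I : finType) : weight I := [ffun k => (k == None)%:R].

(* lambda(h_j) *)
Definition pairh (I : finType) (lam : weight I) (j : I) : rat := lam (Some j).

Definition a0 (I : finType) (i0 : I) (a : I -> nat) : rat := (a i0)%:R.

Definition alpha (I : finType) (i0 : I) (A : I -> I -> int) (a : I -> nat)
    (j : I) : weight I :=
  \sum_(i : I) ((A i j)%:~R : rat) *: Lam i
  + (if j == i0 then (a0 i0 a)^-1 else 0) *: delta I.

Definition in_P (I : finType) (i0 : I) (a : I -> nat) (lam : weight I) : Prop :=
  (forall j : I, lam (Some j) \is a Num.int) /\ (a0 i0 a * lam None \is a Num.int).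

Definition refl (I : finType) (i0 : I) (A : I -> I -> int) (a : I -> nat)
    (j : I) (lam : weight I) : weight I :=
  lam - pairh lam j *: alpha i0 A a j.

Definition in01 (t : rat) : bool := (0 <= t <= 1).

Definition piecewise_linear (V : lmodType rat) (f : rat -> V) : Prop :=
  exists (n : nat) (s : nat -> rat),
    [/\ s 0%N = 0, s n = 1,
        forall k, (k < n)%N -> s k < s k.+1 &
        forall k t, (k < n)%N -> s k <= t <= s k.+1 ->
          f t = f (s k) + ((t - s k) / (s k.+1 - s k)) *: (f (s k.+1) - f (s k))].

Definition path_ (I : finType) := rat -> weight I.

Definition is_LS_path (I : finType) (i0 : I) (a : I -> nat) (p : path_ I) : Prop :=
  [/\ piecewise_linear p, p 0 = 0 & in_P i0 a (p 1)].

Definition the_min (P : rat -> Prop) : rat :=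
  epsilon (inhabits 0) (fun x => P x /\ forall y, P y -> x <= y).
Definition the_max (P : rat -> Prop) : rat :=
  epsilon (inhabits 0) (fun x => P x /\ forall y, P y -> y <= x).

Section RootOps.
Variables (I : finType) (i0 : I) (A : I -> I -> int) (a : I -> nat).

Definition hfun (j : I) (p : path_ I) (t : rat) : rat := pairh (p t) j.
Definition hmin (j : I) (p : path_ I) : rat :=
  the_min (fun m => exists2 t, in01 t & hfun j p t = m).

(* Littelmann's raising operator e_j (None stands for the zero element 0) *)
Definition e_op (j : I) (p : path_ I) : option (path_ I) :=
  let h := hfun j p in
  let m := hmin j p in
  if -1 < m then None else
  let t1 := the_min (fun t => in01 t /\ h t = m) in
  let t0 := the_max (fun t => 0 <= t <= t1 /\
                       forall s, 0 <= s <= t -> m + 1 <= h s) in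
  Some (fun t => if t <= t0 then p t
                 else if t <= t1 then p t0 + refl i0 A a j (p t - p t0)
                 else p t + alpha i0 A a j).

Definition f_op (j : I) (p : path_ I) : option (path_ I) :=
  let h := hfun j p in
  let m := hmin j p in
  if h 1 - m < 1 then None else
  let t0 := the_max (fun t => in01 t /\ h t = m) in
  let t1 := the_min (fun t => t0 <= t <= 1 /\
                       forall s, t <= s <= 1 -> m + 1 <= h s) in
  Some (fun t => if t <= t0 then p t
                 else if t <= t1 then p t0 + refl i0 A a j (p t - p t0)
                 else p t - alpha i0 A a j).

Definition S_op (j : I) (p : path_ I) : option (path_ I) :=
  let n : int := numq (pairh (p 1) j) in
  if (0 <= n)%R then iter `|n|%N (obind (f_op j)) (Some p)
  else iter `|n|%N (obind (e_op j)) (Some p).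

(* S_w for w = r_{j_1} ... r_{j_k} given by the word [:: j_1; ...; j_k]:
   S_w = S_{j_1} o ... o S_{j_k}. *)
Definition S_word (w : seq I) (p : path_ I) : option (path_ I) :=
  foldr (fun j acc => obind (S_op j) acc) (Some p) w.

End RootOps.

(* The conclusion relation: both sides are paths (or both 0) and they
   differ by F(t) delta on [0,1] cap Q. *)
Definition shifted_by (I : finType) (F : rat -> rat) (p p' : path_ I) : Prop :=
  forall t, in01 t -> p t = p' t + F t *: delta I.

Definition orel (T : Type) (R : T -> T -> Prop) (x y : option T) : Prop :=
  match x, y with
  | Some u, Some v => R u v
  | None, None => True
  | _, _ => False
  end.

(* Since <delta, h_j> = 0, a path and its shift by F(t) delta have the same function
   h_j(t) = <pi(t), h_j> on [0, 1].  The operators e_j and f_j read their cut points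
   t0 < t1 off h_j alone and then reflect the piece of the path between t0 and t1 by r_j,
   which fixes delta; so e_j, f_j, hence S_j and S_w, preserve the shift relation.
   The substance is that the minima and crossing points defining t0 and t1 exist: h_j is
   piecewise affine, so they can be found among finitely many grid points.  Piecewise
   linearity is in turn preserved by the operators, because h_j changes by exactly 1
   between t0 and t1, which makes the reflected path continuous at t1. *)

From mathcomp Require Import all_boot all_order all_algebra.
From mathcomp Require Import ring lra.
From Stdlib Require Import ClassicalEpsilon.
Set Implicit Arguments. Unset Strict Implicit. Unset Printing Implicit Defensive.
Import Order.TTheory GRing.Theory Num.Theory.
Local Open Scope ring_scope.

Lemma the_min_eq (P : rat -> Prop) x : P x -> (forall y, P y -> x <= y) -> the_min P = x.
Proof.
move=> Px x_min.
have [Pm m_min] := epsilon_spec (inhabits 0) (fun m => P m /\ forall y, P y -> m <= y)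
  (ex_intro _ x (conj Px x_min)).
by apply/eqP; rewrite eq_le m_min // x_min.
Qed.

Lemma the_max_eq (P : rat -> Prop) x : P x -> (forall y, P y -> y <= x) -> the_max P = x.
Proof.
move=> Px x_max.
have [PM M_max] := epsilon_spec (inhabits 0) (fun M => P M /\ forall y, P y -> y <= M)
  (ex_intro _ x (conj Px x_max)).
by apply/eqP; rewrite eq_le M_max // x_max.
Qed.

Section PiecewiseAffine.
Variable R : realFieldType.
Implicit Types (g : R -> R) (L e : seq R) (a b l s t u v w x y z : R).

Lemma seq_argmax (T : eqType) (key : T -> R) (P : pred T) (s : seq T) (c0 : T) :
  c0 \in s -> P c0 -> exists x : T, [/\ x \in s, P x & forall c, c \in s -> P c -> key c <= key x].
Proof.
move=> c0s Pc0; have : has P s by apply/hasP; exists c0.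
elim: s {c0s} => [//|b s IH] /=; have [/IH [x [xs Px Hx]] _ | nPs] := boolP (has P s).
  have [/andP [Pb lt_xb] | nlt_xb] := boolP (P b && (key x < key b)).
    exists b; split; rewrite ?mem_head // => c /predU1P [-> //|cs Pc].
    exact: le_trans (Hx c cs Pc) (ltW lt_xb).
  exists x; split; rewrite ?inE ?xs ?orbT //.
  move=> c /predU1P [-> Pb|]; last exact: Hx.
  by move: nlt_xb; rewrite Pb -leNgt.
rewrite orbF => Pb.
exists b; split; rewrite ?mem_head // => c /predU1P [-> //|cs Pc].
by move/hasPn: nPs => /(_ c cs); rewrite Pc.
Qed.

Definition no_break L x z := forall l, l \in L -> ~~ (x < l < z).

Definition pw_affine L g := forall x y z, 0 <= x -> x <= y -> y <= z -> z <= 1 ->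
  no_break L x z -> g y = g x + (y - x) / (z - x) * (g z - g x).

(* A function that is [pw_affine L] is affine between consecutive grid points, so its
   extrema and level crossings on [0, 1] can be located by inspecting the grid. *)
Definition grid (L e : seq R) : seq R := 0 :: 1 :: [seq l <- e ++ L | 0 <= l <= 1].

Lemma grid_unit L e c : c \in grid L e -> 0 <= c <= 1.
Proof. by rewrite !inE mem_filter => /or3P [/eqP ->|/eqP ->|/andP []]; rewrite ?lexx ?ler01. Qed.

Lemma grid0 L e : 0 \in grid L e. Proof. exact: mem_head. Qed.
Lemma grid1 L e : 1 \in grid L e. Proof. by rewrite !inE eqxx orbT. Qed.

Lemma grid_break L e l : l \in L -> 0 <= l <= 1 -> l \in grid L e.
Proof. by move=> lL l01; rewrite !inE mem_filter l01 mem_cat lL !orbT. Qed.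

Lemma grid_extra L e l : l \in e -> 0 <= l <= 1 -> l \in grid L e.
Proof. by move=> le l01; rewrite !inE mem_filter l01 mem_cat le !orbT. Qed.

Lemma ratio_unit x t z : x <= t -> t <= z -> 0 <= (t - x) / (z - x) <= 1.
Proof.
move=> xt tz; have [<-|zx] := eqVneq x z; first by rewrite subrr invr0 mulr0 lexx ler01.
have zx_gt0 : 0 < z - x by rewrite subr_gt0 lt_def eq_sym zx (le_trans xt tz).
by rewrite divr_ge0 ?subr_ge0 ?ler_pdivrMr ?mul1r ?lerD2r ?(le_trans xt tz).
Qed.

Lemma convex_lb a u v l : 0 <= l <= 1 -> a <= u -> a <= v -> a <= u + l * (v - u).
Proof. by move=> /andP [? ?] ? ?; nra. Qed.

Lemma ratio_eq0 x t z : x <= t -> t <= z -> (t - x) / (z - x) = 0 -> t = x.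
Proof.
by move=> xt tz /eqP; rewrite mulf_eq0 invr_eq0 !subr_eq0 => /orP [/eqP //|/eqP zx]; lra.
Qed.

Lemma convex_eq_lb a u v l : 0 <= l <= 1 -> a <= u -> a < v -> u + l * (v - u) = a -> l = 0.
Proof. by move=> /andP [l0 l1] au av E; apply/eqP; rewrite eq_le l0 andbT; nra. Qed.

Section Grid.
Variables (L e : seq R) (g : R -> R).
Hypothesis g_aff : pw_affine L g.
Local Notation G := (grid L e).

Lemma grid_interp t : 0 <= t <= 1 -> exists x z, [/\ x \in G, z \in G, x <= t <= z,
  (forall c, c \in G -> c <= t -> c <= x) /\ (forall c, c \in G -> t <= c -> z <= c) &
  g t = g x + (t - x) / (z - x) * (g z - g x)].
Proof.
move=> /andP [t0 t1].
have [x [xG xt Hx]] := seq_argmax (P := fun c => c <= t) id (grid0 L e) t0.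
have [z [zG tz Hz]] := seq_argmax (P := fun c => t <= c) (fun c => - c) (grid1 L e) t1.
have {}Hz c : c \in G -> t <= c -> z <= c by move=> cG tc; rewrite -lerN2 Hz.
have /andP [x0 _] := grid_unit xG; have /andP [_ z1] := grid_unit zG.
exists x, z; split; rewrite ?xt ?tz //; apply: g_aff => // l lL.
apply/negP => /andP [xl lz].
have lG : l \in G by apply: grid_break => //; apply/andP; split; lra.
have [lt|tl] := lerP l t; first by have := Hx l lG lt; lra.
by have := Hz l lG (ltW tl); lra.
Qed.

Lemma pw_affine_ge_grid a b t : a \in G -> (forall c, c \in G -> a <= c -> b <= g c) ->
  a <= t <= 1 -> b <= g t.
Proof.
move=> aG Hb /andP [a_le_t t1]; have /andP [a0 _] := grid_unit aG.
have t01 : 0 <= t <= 1 by rewrite t1 (le_trans a0 a_le_t).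
have [x [z [xG zG /andP [xt tz] [Hx _] ->]]] := grid_interp t01.
have ax := Hx a aG a_le_t.
by apply: convex_lb (ratio_unit xt tz) (Hb x xG ax) (Hb z zG _); lra.
Qed.
End Grid.

Lemma pw_affine_min L g : pw_affine L g ->
  exists m, (exists2 t, 0 <= t <= 1 & g t = m) /\ forall t, 0 <= t <= 1 -> m <= g t.
Proof.
move=> g_aff; have [c [cG _ Hc]] := seq_argmax (P := predT) (fun c => - g c) (grid0 L [::]) isT.
exists (g c); split; first by exists c; first exact: grid_unit cG.
move=> t /andP [t0 t1]; apply: (pw_affine_ge_grid g_aff (grid0 L [::])); last by rewrite t0.
by move=> c' c'G _; rewrite -lerN2 Hc.
Qed.

Lemma pw_affine_last_min L g m : pw_affine L g -> (forall t, 0 <= t <= 1 -> m <= g t) ->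
  (exists2 t, 0 <= t <= 1 & g t = m) ->
  exists T, [/\ 0 <= T <= 1, g T = m & forall s, 0 <= s <= 1 -> g s = m -> s <= T].
Proof.
move=> g_aff Hm [t0 t0_01 gt0]; pose G := grid L [::].
have below_grid s : 0 <= s <= 1 -> g s = m -> exists2 c, c \in G & (g c == m) && (s <= c).
  move=> s01 gs; have [x [z [xG zG /andP [xs sz] _ E]]] := grid_interp [::] g_aff s01.
  have [gz|gz] := eqVneq (g z) m; first by exists z; rewrite ?gz ?eqxx ?sz.
  have gzm : m < g z by rewrite lt_def gz (Hm z (grid_unit zG)).
  have l0 := convex_eq_lb (ratio_unit xs sz) (Hm x (grid_unit xG)) gzm (etrans (esym E) gs).
  by exists x; rewrite // -(ratio_eq0 xs sz l0) gs eqxx lexx.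
have [c cG /andP [gc _]] := below_grid t0 t0_01 gt0.
have [T [TG /eqP gT HT]] := seq_argmax (P := fun c => g c == m) id cG gc.
exists T; split; [exact: grid_unit TG | done | move=> s s01 gs].
by have [c' c'G /andP [gc' sc']] := below_grid s s01 gs; apply: le_trans sc' (HT c' c'G gc').
Qed.

Lemma pw_affine_mirror L g : pw_affine L g -> pw_affine [seq 1 - l | l <- L] (fun t => g (1 - t)).
Proof.
move=> g_aff x y z x0 xy yz z1 xz_free.
have xz_free' : no_break L (1 - z) (1 - x).
  move=> l lL; have := xz_free (1 - l) (map_f _ lL); apply: contra => /andP [? ?].
  by apply/andP; split; lra.
rewrite (g_aff (1 - z) (1 - y) (1 - x)) //; try lra.
have [zx|zx] := eqVneq z x.
  subst z; have -> : y = x by lra.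
  by rewrite !subrr.
by field; rewrite subr_eq0.
Qed.

Lemma unit_mirror s : (0 <= 1 - s <= 1) = (0 <= s <= 1).
Proof. by apply/idP/idP => /andP [? ?]; apply/andP; split; lra. Qed.

Lemma pw_affine_first_min L g m : pw_affine L g -> (forall t, 0 <= t <= 1 -> m <= g t) ->
  (exists2 t, 0 <= t <= 1 & g t = m) ->
  exists T, [/\ 0 <= T <= 1, g T = m & forall s, 0 <= s <= 1 -> g s = m -> T <= s].
Proof.
move=> g_aff Hm [t t01 gt].
have Hm' s : 0 <= s <= 1 -> m <= g (1 - s) by rewrite -unit_mirror; apply: Hm.
have ex' : exists2 s, 0 <= s <= 1 & g (1 - s) = m.
  by exists (1 - t); rewrite ?unit_mirror // opprB addrC subrK.
have [T [T01 gT HT]] := pw_affine_last_min (pw_affine_mirror g_aff) Hm' ex'.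
exists (1 - T); split; rewrite ?unit_mirror // => s s01 gs.
have := HT (1 - s); rewrite unit_mirror opprB addrC subrK => /(_ s01 gs); lra.
Qed.

Lemma segment_crossing g w z b : w < z -> g w < b -> b <= g z ->
  (forall s, w <= s <= z -> g s = g w + (s - w) / (z - w) * (g z - g w)) ->
  exists y, [/\ w < y, y <= z, g y = b & forall s, w <= s <= z -> (b <= g s) = (y <= s)].
Proof.
move=> wz gw gz seg; have gwz := lt_le_trans gw gz.
have zw : z - w != 0 by rewrite subr_eq0 gt_eqF.
have gzw : g z - g w != 0 by rewrite subr_eq0 gt_eqF.
have slope_gt0 : 0 < (g z - g w) / (z - w) by rewrite divr_gt0 // subr_gt0.
have r0 : 0 < (b - g w) / (g z - g w) by rewrite divr_gt0 // subr_gt0.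
have r1 : (b - g w) / (g z - g w) <= 1 by rewrite ler_pdivrMr ?mul1r ?lerD2r // subr_gt0.
pose y := w + (b - g w) / (g z - g w) * (z - w).
have wy : w < y by rewrite /y ltrDl mulr_gt0 // subr_gt0.
have yz : y <= z by rewrite /y -lerBrDl ler_piMl // subr_ge0 ltW.
have seg_y s : w <= s <= z -> g s = b + (s - y) * ((g z - g w) / (z - w)).
  by move=> ws; rewrite seg // /y; field; rewrite zw gzw.
exists y; split => //.
  by rewrite seg_y ?subrr ?mul0r ?addr0 // (ltW wy).
by move=> s ws; rewrite seg_y // lerDl pmulr_lge0 // subr_ge0.
Qed.

Lemma pw_affine_cross L g lo b : pw_affine L g -> 0 <= lo <= 1 -> g lo < b -> b <= g 1 ->
  exists y, [/\ lo < y, y <= 1, g y = b &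
    forall t, lo <= t <= 1 -> (forall s, t <= s <= 1 -> b <= g s) <-> y <= t].
Proof.
move=> g_aff lo01 glo gb1; pose G := grid L [:: lo].
have loG : lo \in G by rewrite grid_extra ?mem_head.
have [w [wG /andP [low gw] Hw]] :=
  seq_argmax (P := fun c => (lo <= c) && (g c < b)) id loG (introT andP (conj (lexx lo) glo)).
have /andP [w0 w1] := grid_unit wG.
have {}w1 : w < 1 by rewrite lt_def w1 andbT; apply: contraTneq gw => <-; rewrite -leNgt.
have [z [zG wz Hz]] := seq_argmax (P := fun c => w < c) (fun c => - c) (grid1 L [:: lo]) w1.
have {}Hz c : c \in G -> w < c -> z <= c by move=> cG wc; rewrite -lerN2 Hz.
have /andP [_ z1] := grid_unit zG.
have above_w c : c \in G -> w < c -> b <= g c.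
  move=> cG wc; rewrite leNgt; apply/negP => gc.
  by have := Hw c cG; rewrite gc (le_trans low (ltW wc)) => /(_ isT); lra.
have no_break_wz : no_break L w z.
  move=> l lL; apply/negP => /andP [wl lz].
  have lG : l \in G by apply: grid_break => //; apply/andP; split; lra.
  by have := Hz l lG wl; lra.
have [y [wy yz gy Hy]] := segment_crossing wz gw (above_w z zG wz)
  (fun s ws => g_aff w s z w0 (proj1 (andP ws)) (proj2 (andP ws)) z1 no_break_wz).
have above_z s : z <= s <= 1 -> b <= g s.
  by apply: (pw_affine_ge_grid g_aff zG) => c cG zc; apply: above_w cG (lt_le_trans wz zc).
exists y; split; rewrite ?(le_lt_trans low wy) ?(le_trans yz z1) // => t /andP [lot t1].
split=> [above_t|yt s /andP [ts s1]].
  rewrite leNgt; apply/negP => ty; have [tw|wt] := lerP t w.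
    by have := above_t w; rewrite tw (ltW w1) => /(_ isT); lra.
  have := above_t t; rewrite lexx t1 (Hy t) ?(ltW wt) ?(le_trans (ltW ty) yz) //.
  by rewrite leNgt ty => /(_ isT).
have [sz|zs] := lerP s z; last by rewrite above_z // (ltW zs).
by rewrite Hy ?(le_trans yt ts) // (le_trans (ltW wy) (le_trans yt ts)).
Qed.

Lemma pw_affine_cross_left L g hi b : pw_affine L g -> 0 <= hi <= 1 -> g hi < b -> b <= g 0 ->
  exists y, [/\ 0 <= y, y < hi, g y = b &
    forall t, 0 <= t <= hi -> (forall s, 0 <= s <= t -> b <= g s) <-> t <= y].
Proof.
move=> g_aff hi01 ghi gb0.
have mirror_hi : g (1 - (1 - hi)) < b by rewrite opprB addrC subrK.
have mirror_0 : b <= g (1 - 1) by rewrite subrr.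
have [y [hiy y1 gy Hy]] :=
  pw_affine_cross (pw_affine_mirror g_aff) (etrans (unit_mirror hi) hi01) mirror_hi mirror_0.
exists (1 - y); split; [lra | lra | exact: gy | move=> t /andP [t0 thi]].
have /andP [_ hi1] := hi01.
have t_mirror : 1 - hi <= 1 - t <= 1 by apply/andP; split; lra.
have [Hy1 Hy2] := Hy (1 - t) t_mirror.
split=> [Hb|ty s /andP [s0 st]].
  suff : y <= 1 - t by lra.
  by apply: Hy1 => s /andP [ts s1]; apply: Hb; apply/andP; split; lra.
have y_t : y <= 1 - t by lra.
have s_mirror : 1 - t <= 1 - s <= 1 by apply/andP; split; lra.
by have := Hy2 y_t (1 - s) s_mirror; rewrite opprB addrC subrK.
Qed.

Definition affine_at (V : lmodType R) (f : R -> V) x y z :=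
  f y = f x + ((y - x) / (z - x)) *: (f z - f x).

Definition pw_affine_path (V : lmodType R) L (f : R -> V) :=
  forall x y z, 0 <= x -> x <= y -> y <= z -> z <= 1 -> no_break L x z -> affine_at f x y z.

Lemma affine_at_map (V W : lmodType R) (f : R -> V) (h : R -> W) (l : V -> W) c x y z :
  linear l -> (forall u, x <= u <= z -> h u = c + l (f u)) -> x <= y <= z ->
  affine_at f x y z -> affine_at h x y z.
Proof.
move=> l_lin h_eq /andP [xy yz] f_aff; have xz := le_trans xy yz.
rewrite /affine_at !h_eq ?lexx ?xy ?yz ?xz // f_aff [f x + _]addrC l_lin.
by rewrite (zmod_morphism_linear l_lin) opprD addrACA subrr add0r addrA addrAC.
Qed.

End PiecewiseAffine.

Lemma piecewise_linear_pw_affine (V : lmodType rat) (f : rat -> V) :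
  piecewise_linear f -> exists L, pw_affine_path L f.
Proof.
move=> [n [s [s0 sn s_inc s_aff]]].
exists (mkseq s n.+1) => x y z x0 xy yz z1 free; rewrite /affine_at.
have [xz|xz] := eqVneq x z.
  subst z; have -> : y = x by lra.
  by rewrite !subrr scaler0 addr0.
have x_lt_z : x < z by rewrite lt_def eq_sym xz (le_trans xy yz).
have n_gt0 : (0 < n)%N.
  by rewrite lt0n; apply/eqP => n0; move: sn; rewrite n0 s0 => /eqP; rewrite eq_sym oner_eq0.
have iota0 : 0%N \in iota 0 n by rewrite mem_iota.
have s0x : s 0%N <= x by rewrite s0.
have [k [kn sk Hk]] := seq_argmax (P := fun k => s k <= x) (fun k : nat => (k%:R : rat)) iota0 s0x.
move: kn; rewrite mem_iota add0n => /andP [_ kn].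
have x_lt_sk1 : x < s k.+1.
  have [k1n|] := ltnP k.+1 n.
    have k1_iota : k.+1 \in iota 0 n by rewrite mem_iota.
    by rewrite ltNge; apply/negP => /(Hk k.+1 k1_iota); rewrite ler_nat ltnn.
  move=> n_le_k1; have -> : k.+1 = n by apply/eqP; rewrite eqn_leq kn n_le_k1.
  by rewrite sn (lt_le_trans x_lt_z z1).
have z_le_sk1 : z <= s k.+1.
  have k1_iota : k.+1 \in iota 0 n.+1 by rewrite mem_iota ltnS.
  by have := free (s k.+1) (map_f _ k1_iota); rewrite x_lt_sk1 /= -leNgt.
have d_neq0 : s k.+1 - s k != 0 by rewrite subr_eq0 gt_eqF ?s_inc.
have zx_neq0 : z - x != 0 by rewrite subr_eq0 gt_eqF.
rewrite (s_aff k x kn) ?sk ?(ltW x_lt_sk1) //.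
rewrite (s_aff k y kn) ?(le_trans sk xy) ?(le_trans yz z_le_sk1) //.
rewrite (s_aff k z kn) ?(le_trans sk (le_trans xy yz)) ?z_le_sk1 //.
rewrite opprD addrACA subrr add0r -scalerBl scalerA -addrA -scalerDl.
by congr (_ + _ *: _); field; rewrite d_neq0 zx_neq0.
Qed.


Ltac weight_eq := apply/ffunP => ?; rewrite !ffunE /GRing.scale /=; ring.

Lemma pw_affine_hfun (I : finType) L (q : path_ I) j :
  pw_affine_path L q -> pw_affine L (hfun j q).
Proof. by move=> q_aff x y z *; rewrite /hfun /pairh (q_aff x y z) // !ffunE. Qed.

Section Reflection.
Variables (I : finType) (i0 : I) (A : I -> I -> int) (a : I -> nat) (j : I).
Local Notation r := (refl i0 A a j).
Local Notation alpha_j := (alpha i0 A a j).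

Lemma refl_linear : linear r.
Proof. by move=> k u v; rewrite /refl /pairh; weight_eq. Qed.

Lemma refl_glue u v : u + r (v - u) = v + (pairh u j - pairh v j) *: alpha_j.
Proof. by rewrite /refl /pairh; weight_eq. Qed.

Definition reflect_segment (q : path_ I) (t0 t1 : rat) (b : weight I) : path_ I :=
  fun t => if t <= t0 then q t else if t <= t1 then q t0 + r (q t - q t0) else q t + b.

Lemma reflect_segment_pw_affine L q t0 t1 b : pw_affine_path L q -> t0 < t1 ->
  q t0 + r (q t1 - q t0) = q t1 + b -> pw_affine_path (t0 :: t1 :: L) (reflect_segment q t0 t1 b).
Proof.
move=> q_aff t01 glue x y z x0 xy yz z1 free.
have xyz : x <= y <= z by rewrite xy yz.
have free_L : no_break L x z by move=> l lL; apply: free; rewrite !inE lL !orbT.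
have q_xyz := q_aff x y z x0 xy yz z1 free_L.
have id_lin : linear (@idfun (weight I)) by [].
have [z_t0|t0_z] := lerP z t0.
  apply: (affine_at_map (c := 0) id_lin) q_xyz => // u /andP [_ uz].
  by rewrite /reflect_segment (le_trans uz z_t0) add0r.
have t0_x : t0 <= x by move: (free t0 (mem_head _ _)); rewrite t0_z andbT -leNgt.
have [z_t1|t1_z] := lerP z t1.
  apply: (affine_at_map (c := q t0 - r (q t0)) refl_linear) q_xyz => // u /andP [xu uz].
  rewrite /reflect_segment (le_trans uz z_t1); case: ifP => [u_t0|_].
    have -> : u = t0 by apply/eqP; rewrite eq_le u_t0 (le_trans t0_x xu).
    by rewrite subrK.
  by rewrite (zmod_morphism_linear refl_linear) addrCA addrC.
have t1_in : t1 \in t0 :: t1 :: L by rewrite !inE eqxx orbT.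
have t1_x : t1 <= x by move: (free t1 t1_in); rewrite t1_z andbT -leNgt.
apply: (affine_at_map (c := b) id_lin) q_xyz => // u /andP [xu uz].
have u_gt_t0 : t0 < u := lt_le_trans t01 (le_trans t1_x xu).
rewrite /reflect_segment ifF; last by apply/negbTE; rewrite -ltNge.
case: ifP => [u_t1|_]; last by rewrite addrC.
have -> : u = t1 by apply/eqP; rewrite eq_le u_t1 (le_trans t1_x xu).
by rewrite glue addrC.
Qed.

Lemma reflect_segment_shift (F : rat -> rat^o) q q' t0 t1 b : shifted_by F q q' -> in01 t0 ->
  shifted_by F (reflect_segment q t0 t1 b) (reflect_segment q' t0 t1 b).
Proof.
move=> qq' t0_01 t t01; rewrite /reflect_segment (qq' t t01) (qq' t0 t0_01).
by case: ifP => _ //; case: ifP => _; rewrite /refl /pairh; weight_eq.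
Qed.
End Reflection.

Section RootOperators.
Variables (I : finType) (i0 : I) (A : I -> I -> int) (a : I -> nat) (j : I).
Local Notation alpha_j := (alpha i0 A a j).
Implicit Types (q r : path_ I) (g : rat -> rat).

Lemma in01_1 : in01 1. Proof. by rewrite /in01 ler01 lexx. Qed.

Lemma hmin_eq r g m : (exists2 t, in01 t & g t = m) -> (forall t, in01 t -> m <= g t) ->
  {in in01, hfun j r =1 g} -> hmin j r = m.
Proof.
move=> [t t01 gt] m_min rg; apply: the_min_eq; first by exists t; rewrite ?rg.
by move=> _ [s s01 <-]; rewrite rg ?m_min.
Qed.

Lemma f_op_cut L g : pw_affine L g ->
  (forall r, {in in01, hfun j r =1 g} -> f_op i0 A a j r = None) \/
  exists t0 t1, [/\ 0 <= t0, t0 < t1, t1 <= 1, g t1 = g t0 + 1 &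
    forall r, {in in01, hfun j r =1 g} ->
      f_op i0 A a j r = Some (reflect_segment i0 A a j r t0 t1 (- alpha_j))].
Proof.
move=> g_aff; have [m [m_val m_min]] := pw_affine_min g_aff.
have [t0 [t0_01 gt0 t0_max]] := pw_affine_last_min g_aff m_min m_val.
have [small|big] := ltrP (g 1 - m) 1.
  by left=> r rg; rewrite /f_op /= (hmin_eq m_val m_min rg) rg ?in01_1 ?small.
have gt0_lt : g t0 < m + 1 by rewrite gt0 ltrDl ltr01.
have g1_ge : m + 1 <= g 1 by rewrite addrC -lerBrDr.
have [t1 [t0_t1 t1_1 gt1 t1_min]] := pw_affine_cross g_aff t0_01 gt0_lt g1_ge.
right; exists t0, t1; split; rewrite ?gt1 ?gt0 //; first by case/andP: t0_01.
have t0_ge0 : 0 <= t0 by case/andP: t0_01.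
have rg_above r t s : {in in01, hfun j r =1 g} -> t0 <= t -> t <= s <= 1 ->
  hfun j r s = g s.
  move=> rg t0t /andP [ts s1].
  by rewrite rg // unfold_in /in01 s1 (le_trans t0_ge0 (le_trans t0t ts)).
move=> r rg; rewrite /f_op /= (hmin_eq m_val m_min rg) rg ?in01_1 // ltNge big /=.
set T0 := the_max _; set T1 := the_min _.
have T0E : T0 = t0.
  apply: the_max_eq => [|s [s01 rs]]; first by split; rewrite ?rg.
  by apply: (t0_max s s01); rewrite -rg.
have T1E : T1 = t1.
  rewrite /T1 T0E; apply: the_min_eq => [|t [t01 above]].
    have t01 : t0 <= t1 <= 1 by rewrite (ltW t0_t1) t1_1.
    split=> // s s01; rewrite (rg_above r t1) ?(ltW t0_t1) //.
    exact: (proj2 (t1_min t1 t01) (lexx t1)).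
  apply/(t1_min t t01) => s s01; have /andP [t0t _] := t01.
  by rewrite -(rg_above r t) //; apply: above.
by rewrite T0E T1E.
Qed.

Lemma e_op_cut L g : pw_affine L g -> g 0 = 0 ->
  (forall r, {in in01, hfun j r =1 g} -> e_op i0 A a j r = None) \/
  exists t0 t1, [/\ 0 <= t0, t0 < t1, t1 <= 1, g t1 = g t0 - 1 &
    forall r, {in in01, hfun j r =1 g} ->
      e_op i0 A a j r = Some (reflect_segment i0 A a j r t0 t1 alpha_j)].
Proof.
move=> g_aff g0; have [m [m_val m_min]] := pw_affine_min g_aff.
have [t1 [t1_01 gt1 t1_min]] := pw_affine_first_min g_aff m_min m_val.
have [small|big] := ltrP (-1) m.
  by left=> r rg; rewrite /e_op /= (hmin_eq m_val m_min rg) small.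
have gt1_lt : g t1 < m + 1 by rewrite gt1 ltrDl ltr01.
have g0_ge : m + 1 <= g 0 by rewrite g0 -lerBrDr sub0r.
have [t0 [t0_ge0 t0_t1 gt0 t0_max]] := pw_affine_cross_left g_aff t1_01 gt1_lt g0_ge.
have t1_le1 : t1 <= 1 by case/andP: t1_01.
right; exists t0, t1; split; rewrite ?gt1 ?gt0 ?addrK //.
have rg_below r t s : {in in01, hfun j r =1 g} -> t <= t1 -> 0 <= s <= t ->
  hfun j r s = g s.
  move=> rg tt1 /andP [s0 st].
  by rewrite rg // unfold_in /in01 s0 (le_trans st (le_trans tt1 t1_le1)).
move=> r rg; rewrite /e_op /= (hmin_eq m_val m_min rg) ltNge big /=.
set T1 := the_min _; set T0 := the_max _.
have T1E : T1 = t1.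
  apply: the_min_eq => [|s [s01 rs]]; first by split; rewrite ?rg.
  by apply: (t1_min s s01); rewrite -rg.
have T0E : T0 = t0.
  rewrite /T0 T1E; apply: the_max_eq => [|t [t01 below]].
    have t01 : 0 <= t0 <= t1 by rewrite t0_ge0 (ltW t0_t1).
    split=> // s s01; rewrite (rg_below r t0) ?(ltW t0_t1) //.
    exact: (proj2 (t0_max t0 t01) (lexx t0)).
  apply/(t0_max t t01) => s s01; have /andP [_ tt1] := t01.
  by rewrite -(rg_below r t) //; apply: below.
by rewrite T0E T1E.
Qed.

End RootOperators.

Section OptionRelation.
Variables (T : Type) (R : T -> T -> Prop).

Lemma orel_sub (R' : T -> T -> Prop) x y :
  (forall u v, R u v -> R' u v) -> orel R x y -> orel R' x y.
Proof. by case: x; case: y => //= u v; apply. Qed.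

Lemma orel_obind (f : T -> option T) x y :
  (forall u v, R u v -> orel R (f u) (f v)) -> orel R x y -> orel R (obind f x) (obind f y).
Proof. by move=> Rf; case: x; case: y => //= u v; apply: Rf. Qed.

Lemma orel_iter (f : T -> option T) n x y :
  (forall u v, R u v -> orel R (f u) (f v)) -> orel R x y ->
  orel R (iter n (obind f) x) (iter n (obind f) y).
Proof. by move=> Rf; elim: n => //= n IH Rxy; apply: orel_obind (IH Rxy). Qed.
End OptionRelation.

(* The part of membership in the set of paths that the root operators rely on. *)
Definition pl_path (I : finType) (q : path_ I) := (exists L, pw_affine_path L q) /\ q 0 = 0.

Definition shifted_pl (I : finType) (F : rat -> rat^o) (q q' : path_ I) :=
  [/\ shifted_by F q q', pl_path q & pl_path q'].

Section ShiftedPaths.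
Variables (I : finType) (i0 : I) (A : I -> I -> int) (a : I -> nat) (F : rat -> rat^o).
Implicit Types (q : path_ I) (j : I).

Lemma hfun_shift j q q' : shifted_by F q q' -> {in in01, hfun j q' =1 hfun j q}.
Proof. by move=> qq' t t01; rewrite /hfun (qq' t t01) /pairh !ffunE /= scaler0 addr0. Qed.

Lemma reflect_segment_shifted_pl j q q' t0 t1 b : shifted_pl F q q' -> 0 <= t0 -> t0 < t1 ->
  t1 <= 1 -> b = (hfun j q t0 - hfun j q t1) *: alpha i0 A a j ->
  shifted_pl F (reflect_segment i0 A a j q t0 t1 b) (reflect_segment i0 A a j q' t0 t1 b).
Proof.
case=> qq' [[L q_aff] q0] [[L' q'_aff] q'0] t0_ge0 t0_t1 t1_le1 b_eq.
have t0_01 : in01 t0 by rewrite /in01 t0_ge0 (le_trans (ltW t0_t1) t1_le1).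
have t1_01 : in01 t1 by rewrite /in01 t1_le1 (le_trans t0_ge0 (ltW t0_t1)).
have glue r : hfun j r t0 - hfun j r t1 = hfun j q t0 - hfun j q t1 ->
    r t0 + refl i0 A a j (r t1 - r t0) = r t1 + b.
  by move=> e; rewrite refl_glue b_eq; congr (_ + _ *: _).
split; first exact: reflect_segment_shift.
  split; last by rewrite /reflect_segment t0_ge0.
  by exists (t0 :: t1 :: L); apply: reflect_segment_pw_affine => //; apply: glue.
split; last by rewrite /reflect_segment t0_ge0.
exists (t0 :: t1 :: L'); apply: reflect_segment_pw_affine => //; apply: glue.
by rewrite !(hfun_shift j qq').
Qed.

Lemma f_op_shifted_pl j q q' : shifted_pl F q q' ->
  orel (shifted_pl F) (f_op i0 A a j q) (f_op i0 A a j q').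
Proof.
move=> qq'; have [q_q' [[L q_aff] _] _] := qq'.
have agree_q : {in in01, hfun j q =1 hfun j q} by [].
have agree_q' := hfun_shift j q_q'.
have [none|[t0 [t1 [t0_ge0 t0_t1 t1_le1 h_t1 some]]]] := f_op_cut i0 A a j (pw_affine_hfun j q_aff).
  by rewrite !none.
rewrite !some //=; apply: reflect_segment_shifted_pl => //.
by rewrite h_t1 [- (_ + 1)]opprD addrA subrr add0r scaleN1r.
Qed.

Lemma e_op_shifted_pl j q q' : shifted_pl F q q' ->
  orel (shifted_pl F) (e_op i0 A a j q) (e_op i0 A a j q').
Proof.
move=> qq'; have [q_q' [[L q_aff] q0] _] := qq'.
have agree_q : {in in01, hfun j q =1 hfun j q} by [].
have agree_q' := hfun_shift j q_q'.
have h0 : hfun j q 0 = 0 by rewrite /hfun q0 /pairh ffunE.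
have [none|[t0 [t1 [t0_ge0 t0_t1 t1_le1 h_t1 some]]]] :=
  e_op_cut i0 A a j (pw_affine_hfun j q_aff) h0.
  by rewrite !none.
rewrite !some //=; apply: reflect_segment_shifted_pl => //.
by rewrite h_t1 opprB addrCA subrr addr0 scale1r.
Qed.

Lemma S_op_shifted_pl j q q' : shifted_pl F q q' ->
  orel (shifted_pl F) (S_op i0 A a j q) (S_op i0 A a j q').
Proof.
move=> qq'; have [q_q' _ _] := qq'.
rewrite /S_op -/(hfun j q' 1) (hfun_shift j q_q' in01_1); case: ifP => _.
  by apply: orel_iter => // u v; apply: f_op_shifted_pl.
by apply: orel_iter => // u v; apply: e_op_shifted_pl.
Qed.
End ShiftedPaths.

Unset Implicit Arguments.
Theorem lemma2p27 (I : finType) (i0 : I) (A : I -> I -> int) (a av : I -> nat)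
  (Haff : affine_datum i0 A a av)
  (p p' : path_ I) (F : rat -> rat^o)
  (Hp : is_LS_path i0 a p) (Hp' : is_LS_path i0 a p')
  (HF : piecewise_linear F) (HF0 : F 0 = 0) (HF1 : a0 i0 a * F 1 \is a Num.int)
  (Hpp : forall t, in01 t -> p t = p' t + F t *: delta I) :
  forall w : seq I, orel (shifted_by F) (S_word i0 A a w p) (S_word i0 A a w p').
Proof.
have [/piecewise_linear_pw_affine p_pl p0 _] := Hp.
have [/piecewise_linear_pw_affine p'_pl p'0 _] := Hp'.
have start : shifted_pl F p p' by split=> //; split.
move=> w; apply: (orel_sub (R := shifted_pl F)) => [u v []//|].
elim: w => [//|j w IH] /=.
by apply: orel_obind IH => u v; apply: S_op_shifted_pl.
Qed.
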